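(* Let $\tau\ge1$ be an integer and $h(z;\lambda)=z^{\tau+1}-z^{\tau}+\lambda$. Let $I\subseteq(0,\infty)$ be an interval and $z:I\to\mathbb C\setminus\mathbb R$ a continuous function with $h(z(\lambda);\lambda)=0$ for all $\lambda\in I$. Then $\lambda\mapsto|z(\lambda)|$ is strictly increasing on $I$. (That is, all roots of $h(\cdot;\lambda)$ with nonzero imaginary part have modulus increasing with $\lambda$.) *)

From Stdlib Require Import Reals.
From Coquelicot Require Import Coquelicot.
Open Scope R_scope.

Fixpoint cpow (z : Complex.C) (n : nat) : Complex.C :=
  match n with
  | O => RtoC 1
  | S m => Cmult z (cpow z m)
  end.

Definition h (tau : nat) (z : Complex.C) (lam : R) : Complex.C :=
  Cplus (Cminus (cpow z (S tau)) (cpow z tau)) (RtoC lam).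

Definition is_interval (I : R -> Prop) : Prop :=
  forall a b c, I a -> I b -> a <= c -> c <= b -> I c.

From Stdlib Require Import Reals Lra Lia Psatz.
From Coquelicot Require Import Coquelicot.
Open Scope R_scope.

(* Write p(w) = w^(tau+1) - w^tau, so that h(w; lam) = p(w) + lam.
   1. Root estimate.  If z is a non-real root of h(.; lam), lam > 0, then
      |z^tau| < (tau+1) lam.  Indeed z^tau (z - 1) = -lam gives
      lam Im(z^tau) = |z^tau|^2 Im z and Im(z^(tau+1)) = Im(z^tau), while
      |Im(w^n)| < n |w|^(n-1) |Im w| for n >= 2 and non-real w.  Consequently
      Re(z p'(z)) = Re(z^tau) - (tau+1) lam < 0.
   2. Local step.  For two roots z0 (at lam0) and z (at lam) one has
      (z - z0) Q(z) = lam0 - lam, where Q(w) = pquot tau w z0 is the divided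
      difference of p at w and z0, a polynomial with Q(z0) = p'(z0).  If a real step
      d q = r < 0 satisfies Re(a q) < 0, then |a + d| > |a|.  Applied with
      a = z0, d = z - z0, q = Q(z), and by continuity of lam |-> Re(z0 Q(z lam)),
      |z(lam)| > |z(lam0)| for lam slightly to the right of lam0.
   3. Globalisation.  A continuous real function on an interval that increases
      strictly to the right of every point is strictly increasing (compare
      with a maximiser on a compact segment). *)

(* [dquot n w c] is the divided difference (w^n - c^n) / (w - c), written as
   the polynomial sum of w^k c^(n-1-k). *)
Fixpoint dquot (n : nat) (w c : Complex.C) : Complex.C :=
  match n with
  | O => RtoC 0
  | S m => Cplus (Cmult w (dquot m w c)) (cpow c m)
  end.

Lemma cpow_sub_factor n w c :
  Cminus (cpow w n) (cpow c n) = Cmult (Cminus w c) (dquot n w c).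
Proof.
  induction n as [|n IH]; simpl.
  - ring.
  - replace (cpow w n) with (Cplus (cpow c n) (Cmult (Cminus w c) (dquot n w c)))
      by (rewrite <- IH; ring).
    ring.
Qed.

(* On the diagonal the divided difference is the derivative n c^(n-1),
   stated after multiplication by c. *)
Lemma dquot_diag n c : Cmult c (dquot n c c) = Cmult (RtoC (INR n)) (cpow c n).
Proof.
  induction n as [|n IH]; simpl dquot; simpl cpow.
  - simpl. ring.
  - rewrite S_INR, RtoC_plus.
    transitivity (Cplus (Cmult c (Cmult c (dquot n c c))) (Cmult c (cpow c n)));
      [ring|].
    rewrite IH. ring.
Qed.

Definition pquot (tau : nat) (w c : Complex.C) : Complex.C :=
  Cminus (dquot (S tau) w c) (dquot tau w c).

Lemma root_difference tau w c lam lam0 :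
  h tau w lam = RtoC 0 -> h tau c lam0 = RtoC 0 ->
  Cmult (Cminus w c) (pquot tau w c) = RtoC (lam0 - lam).
Proof.
  intros Hw Hc. unfold h in Hw, Hc. unfold pquot.
  transitivity (Cminus (Cminus (cpow w (S tau)) (cpow c (S tau)))
                       (Cminus (cpow w tau) (cpow c tau)));
    [rewrite !cpow_sub_factor; ring|].
  rewrite RtoC_minus.
  transitivity (Cminus (Cplus (Cminus (cpow w (S tau)) (cpow w tau)) (RtoC lam))
                       (Cplus (Cminus (cpow c (S tau)) (cpow c tau)) (RtoC lam0))
                + (RtoC lam0 - RtoC lam))%C; [ring|].
  rewrite Hw, Hc. ring.
Qed.

Lemma Cmod_cpow w n : Cmod (cpow w n) = Cmod w ^ n.
Proof.
  induction n as [|n IH]; simpl.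
  - apply Cmod_1.
  - rewrite Cmod_mult, IH. reflexivity.
Qed.

Lemma Re_lt_Cmod w : Im w <> 0 -> Rabs (Re w) < Cmod w.
Proof.
  intros Hy.
  pose proof (Cmod2_alt w) as Hw. pose proof (Cmod_ge_0 w).
  assert (0 < Im w ^ 2) by (apply pow2_gt_0; exact Hy).
  rewrite <- (Rabs_pos_eq (Cmod w)) by assumption.
  apply Rsqr_lt_abs_0. unfold Rsqr. nra.
Qed.

Lemma Im_mult_bound w c :
  Rabs (Im (Cmult w c)) <= Rabs (Re w) * Rabs (Im c) + Rabs (Im w) * Cmod c.
Proof.
  change (Im (Cmult w c)) with (Re w * Im c + Im w * Re c).
  eapply Rle_trans; [apply Rabs_triang|]. rewrite !Rabs_mult.
  pose proof (re_le_Cmod c). pose proof (Rabs_pos (Im w)). nra.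
Qed.

Lemma Im_cpow_le w n :
  Rabs (Im (cpow w (S n))) <= INR (S n) * Cmod w ^ n * Rabs (Im w).
Proof.
  induction n as [|n IH].
  - replace (Im (cpow w 1)) with (Im w) by (unfold Im; simpl; ring). simpl. lra.
  - eapply Rle_trans; [apply (Im_mult_bound w (cpow w (S n)))|].
    rewrite Cmod_cpow, (S_INR (S n)).
    assert (Hre : Rabs (Re w) * Rabs (Im (cpow w (S n)))
                  <= Cmod w * (INR (S n) * Cmod w ^ n * Rabs (Im w))).
    { apply Rmult_le_compat; auto using Rabs_pos, re_le_Cmod. }
    simpl pow. lra.
Qed.

Lemma Im_cpow_lt w n : Im w <> 0 ->
  Rabs (Im (cpow w (S (S n)))) < INR (S (S n)) * Cmod w ^ S n * Rabs (Im w).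
Proof.
  intros Hy.
  eapply Rle_lt_trans; [apply (Im_mult_bound w (cpow w (S n)))|].
  rewrite Cmod_cpow, (S_INR (S n)).
  pose proof (Im_cpow_le w n) as Hn.
  set (B := INR (S n) * Cmod w ^ n * Rabs (Im w)) in *.
  assert (HB : 0 < B).
  { assert (0 < Rabs (Im w)) by (apply Rabs_pos_lt; exact Hy).
    assert (0 < Cmod w) by (pose proof (Re_lt_Cmod w Hy); pose proof (Rabs_pos (Re w)); lra).
    unfold B. apply Rmult_lt_0_compat; [apply Rmult_lt_0_compat|]; auto.
    - apply lt_0_INR; lia.
    - apply pow_lt; assumption. }
  assert (Hstep : Rabs (Re w) * Rabs (Im (cpow w (S n))) < Cmod w * B).
  { apply (Rle_lt_trans _ (Rabs (Re w) * B)).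
    - apply Rmult_le_compat_l; [apply Rabs_pos|exact Hn].
    - apply Rmult_lt_compat_r; [exact HB|apply Re_lt_Cmod, Hy]. }
  unfold B in Hstep. simpl pow. lra.
Qed.

(* Writing a = z^tau, the root equation a (z-1) = -lam
   gives Im(z a) = Im a and lam Im a = |a|^2 Im z, and Im_cpow_lt bounds
   |Im(z a)| by (tau+1) |a| |Im z|. *)
Lemma nonreal_root_cpow_bound tau z lam :
  (1 <= tau)%nat -> 0 < lam -> Im z <> 0 -> h tau z lam = RtoC 0 ->
  Cmod (cpow z tau) < INR (S tau) * lam.
Proof.
  intros Htau Hlam Hy Hroot.
  destruct tau as [|m]; [lia|].
  pose proof (Im_cpow_lt z m Hy) as Hbound.
  rewrite <- Cmod_cpow in Hbound.
  unfold h in Hroot.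
  change (cpow z (S (S m))) with (Cmult z (cpow z (S m))) in *.
  set (a := cpow z (S m)) in *. clearbody a.
  assert (HRe : Re z * Re a - Im z * Im a - Re a + lam = 0).
  { apply (f_equal Re) in Hroot. simpl in Hroot. unfold Re, Im. lra. }
  assert (HIm : Re z * Im a + Im z * Re a - Im a = 0).
  { apply (f_equal Im) in Hroot. simpl in Hroot. unfold Re, Im. lra. }
  change (Im (Cmult z a)) with (Re z * Im a + Im z * Re a) in Hbound.
  replace (Re z * Im a + Im z * Re a) with (Im a) in Hbound by lra.
  assert (Hmix : lam * Im a = Cmod a ^ 2 * Im z).
  { assert (E : lam * Im a - Cmod a ^ 2 * Im z =
      Im a * (Re z * Re a - Im z * Im a - Re a + lam)
      - Re a * (Re z * Im a + Im z * Re a - Im a)) by (rewrite Cmod2_alt; ring).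
    rewrite HRe, HIm in E. lra. }
  assert (Hy' : 0 < Rabs (Im z)) by (apply Rabs_pos_lt; exact Hy).
  assert (Hsq : Cmod a ^ 2 * Rabs (Im z) < INR (S (S m)) * lam * Cmod a * Rabs (Im z)).
  { rewrite <- (Rabs_pos_eq (Cmod a ^ 2)) by apply pow2_ge_0.
    rewrite <- Rabs_mult, <- Hmix, Rabs_mult, (Rabs_pos_eq lam) by lra.
    replace (INR (S (S m)) * lam * Cmod a * Rabs (Im z))
      with (lam * (INR (S (S m)) * Cmod a * Rabs (Im z))) by ring.
    apply Rmult_lt_compat_l; assumption. }
  pose proof (Cmod_ge_0 a).
  assert (Hsq' : Cmod a ^ 2 < INR (S (S m)) * lam * Cmod a).
  { apply (Rmult_lt_reg_r (Rabs (Im z))); assumption. }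
  nra.
Qed.

(* Hence Re(z p'(z)) = Re(z^tau) - (tau+1) lam < 0 at a non-real root. *)
Lemma nonreal_root_slope tau z lam :
  (1 <= tau)%nat -> 0 < lam -> Im z <> 0 -> h tau z lam = RtoC 0 ->
  Re (Cmult z (pquot tau z z)) < 0.
Proof.
  intros Htau Hlam Hy Hroot.
  pose proof (nonreal_root_cpow_bound tau z lam Htau Hlam Hy Hroot) as Hbound.
  pose proof (re_le_Cmod (cpow z tau)) as Hre.
  assert (Hslope : Cmult z (pquot tau z z) =
    Cminus (Cmult (RtoC (INR (S tau))) (cpow z (S tau)))
           (Cmult (RtoC (INR tau)) (cpow z tau))).
  { unfold pquot. rewrite <- !dquot_diag. ring. }
  assert (Hnext : cpow z (S tau) = Cminus (cpow z tau) (RtoC lam)).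
  { unfold h in Hroot.
    transitivity (Cplus (Cplus (Cminus (cpow z (S tau)) (cpow z tau)) (RtoC lam))
                        (Cminus (cpow z tau) (RtoC lam))); [ring|].
    rewrite Hroot. ring. }
  rewrite Hslope, Hnext, S_INR.
  set (a := cpow z tau) in *. clearbody a.
  pose proof (Rle_abs (Re a)).
  rewrite S_INR in Hbound. simpl. unfold Re in *. nra.
Qed.

Section ComplexLimits.
Context {T : Type} {F : (T -> Prop) -> Prop} {FF : Filter F}.

Lemma lim_Cplus (f g : T -> Complex.C) a b :
  filterlim f F (locally a) -> filterlim g F (locally b) ->
  filterlim (fun x => Cplus (f x) (g x)) F (locally (Cplus a b)).
Proof.
  intros Hf Hg. eapply filterlim_comp_2; [exact Hf|exact Hg|].
  apply (filterlim_plus (V := C_NormedModule)).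
Qed.

Lemma lim_Cminus (f g : T -> Complex.C) a b :
  filterlim f F (locally a) -> filterlim g F (locally b) ->
  filterlim (fun x => Cminus (f x) (g x)) F (locally (Cminus a b)).
Proof.
  intros Hf Hg. apply lim_Cplus; [exact Hf|].
  eapply filterlim_comp; [exact Hg|].
  apply (filterlim_opp (V := C_NormedModule)).
Qed.

(* The product is seen as the scalar action of C on itself; [locally_C]
   identifies the two neighbourhood systems of C. *)
Lemma lim_Cmult (f g : T -> Complex.C) a b :
  filterlim f F (locally a) -> filterlim g F (locally b) ->
  filterlim (fun x => Cmult (f x) (g x)) F (locally (Cmult a b)).
Proof.
  intros Hf Hg. eapply filterlim_comp_2; [|exact Hg|].
  - intros P HP. apply Hf, locally_C, HP.
  - apply (filterlim_scal (V := C_NormedModule)).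
Qed.

Lemma lim_pquot (w : T -> Complex.C) w0 tau c :
  filterlim w F (locally w0) ->
  filterlim (fun x => pquot tau (w x) c) F (locally (pquot tau w0 c)).
Proof.
  intros Hw.
  assert (Hdquot : forall n,
    filterlim (fun x => dquot n (w x) c) F (locally (dquot n w0 c))).
  { induction n as [|n IH]; simpl.
    - apply filterlim_const.
    - apply lim_Cplus; [apply lim_Cmult; assumption|apply filterlim_const]. }
  apply lim_Cminus; apply Hdquot.
Qed.

Lemma eventually_negative (f : T -> R) v :
  filterlim f F (locally v) -> v < 0 -> F (fun x => f x < 0).
Proof.
  intros Hf Hv. apply (Hf (fun y => y < 0)).
  exists (mkposreal (- v) ltac:(lra)). intros y Hy.
  change (Rabs (y - v) < - v) in Hy.
  pose proof (Rle_abs (y - v)). lra.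
Qed.

End ComplexLimits.

Lemma lim_Re (w0 : Complex.C) : filterlim Re (locally w0) (locally (Re w0)).
Proof.
  apply filterlim_locally. intros eps. exists eps. intros w Hw. exact (proj1 Hw).
Qed.

Lemma lim_Cmod (w0 : Complex.C) : filterlim Cmod (locally w0) (locally (Cmod w0)).
Proof. apply (filterlim_norm (V := C_NormedModule)). Qed.

(* A real step d q = r < 0 with Re(a q) < 0 increases the modulus:
   Re(conj(a) d) |q|^2 = r Re(a q) > 0 and |a + d|^2 = |a|^2 + 2 Re(conj(a) d) + |d|^2. *)
Lemma Cmod_lt_real_step a d q r :
  Cmult d q = RtoC r -> r < 0 -> Re (Cmult a q) < 0 -> Cmod a < Cmod (Cplus a d).
Proof.
  intros Hstep Hr Haq.
  assert (Hre : Re d * Re q - Im d * Im q = r)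
    by (apply (f_equal Re) in Hstep; exact Hstep).
  assert (Him : Re d * Im q + Im d * Re q = 0)
    by (apply (f_equal Im) in Hstep; exact Hstep).
  change (Re a * Re q - Im a * Im q < 0) in Haq.
  set (inner := Re a * Re d + Im a * Im d).
  assert (Hinner : inner * (Re q ^ 2 + Im q ^ 2) = r * (Re a * Re q - Im a * Im q)).
  { unfold inner. rewrite <- Hre.
    transitivity (r * (Re a * Re q - Im a * Im q)
      + (Re d * Re q - Im d * Im q - r) * (Re a * Re q - Im a * Im q)
      + (Re d * Im q + Im d * Re q) * (Re a * Im q + Im a * Re q)); [ring|].
    rewrite Him, Hre. ring. }
  assert (Hpos : 0 < inner).
  { assert (0 < inner * (Re q ^ 2 + Im q ^ 2)) by (rewrite Hinner; nra).
    pose proof (pow2_ge_0 (Re q)). pose proof (pow2_ge_0 (Im q)). nra. }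
  assert (Hsq : Cmod a ^ 2 < Cmod (Cplus a d) ^ 2).
  { rewrite !Cmod2_alt. unfold inner in Hpos. simpl. unfold Re, Im in *.
    pose proof (pow2_ge_0 (fst d)). pose proof (pow2_ge_0 (snd d)). nra. }
  pose proof (Cmod_ge_0 a). pose proof (Cmod_ge_0 (Cplus a d)). nra.
Qed.

Section RootBranch.
Variables (tau : nat) (I : R -> Prop) (z : R -> Complex.C).
Hypothesis htau : (1 <= tau)%nat.
Hypothesis hIpos : forall x, I x -> 0 < x.
Hypothesis hz_nonreal : forall lam, I lam -> Im (z lam) <> 0.
Hypothesis hz_cont : continuous_on I z.
Hypothesis hz_root : forall lam, I lam -> h tau (z lam) lam = RtoC 0.

Lemma root_modulus_right_increase l0 : I l0 ->
  exists del, 0 < del /\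
    forall l, I l -> l0 < l < l0 + del -> Cmod (z l0) < Cmod (z l).
Proof.
  intros H0. set (z0 := z l0).
  assert (Hslope : filterlim (fun l => Re (Cmult z0 (pquot tau (z l) z0)))
            (within I (locally l0)) (locally (Re (Cmult z0 (pquot tau z0 z0))))).
  { eapply filterlim_comp; [|apply lim_Re].
    apply lim_Cmult; [apply filterlim_const|].
    apply lim_pquot, hz_cont, H0. }
  destruct (eventually_negative _ _ Hslope
              (nonreal_root_slope tau z0 l0 htau (hIpos l0 H0) (hz_nonreal l0 H0)
                 (hz_root l0 H0))) as [del Hdel].
  exists del. split; [apply cond_pos|].
  intros l Hl [Hlt1 Hlt2].
  replace (z l) with (Cplus z0 (Cminus (z l) z0)) by ring.
  apply (Cmod_lt_real_step _ _ (pquot tau (z l) z0) (l0 - l)).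
  - apply root_difference; apply hz_root; assumption.
  - lra.
  - apply Hdel; [|exact Hl].
    change (Rabs (l - l0) < del). rewrite Rabs_pos_eq; lra.
Qed.

End RootBranch.

(* Clamping to a segment [a, b]: needed to extend a function continuous on
   the segment to a function continuous on all of R. *)
Definition clamp (a b t : R) : R := Rmax a (Rmin b t).

Lemma clamp_range a b t : a <= b -> a <= clamp a b t <= b.
Proof. intros Hab. unfold clamp, Rmax, Rmin; repeat destruct Rle_dec; lra. Qed.

Lemma clamp_id a b t : a <= t <= b -> clamp a b t = t.
Proof. intros Ht. unfold clamp, Rmax, Rmin; repeat destruct Rle_dec; lra. Qed.

Lemma clamp_lipschitz a b t s : Rabs (clamp a b t - clamp a b s) <= Rabs (t - s).
Proof.
  unfold clamp, Rmax, Rmin; repeat destruct Rle_dec;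
    unfold Rabs; repeat destruct Rcase_abs; lra.
Qed.

Section RightIncreasing.
Variables (N : R -> R) (I : R -> Prop).
Hypothesis hI : is_interval I.
Hypothesis hN_cont : forall l, I l -> filterlim N (within I (locally l)) (locally (N l)).
Hypothesis hN_right : forall l0, I l0 -> exists del, 0 < del /\
  forall l, I l -> l0 < l < l0 + del -> N l0 < N l.

Lemma right_increase_in_segment l0 b : I l0 -> I b -> l0 < b ->
  exists l, l0 < l <= b /\ N l0 < N l.
Proof.
  intros H0 Hb Hlt.
  destruct (hN_right l0 H0) as [del [Hdel Hincr]].
  pose proof (Rmin_l del (b - l0)). pose proof (Rmin_r del (b - l0)).
  assert (0 < Rmin del (b - l0)) by (apply Rmin_pos; lra).
  exists (l0 + Rmin del (b - l0) / 2). split; [lra|].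
  apply Hincr; [apply (hI l0 b); [exact H0|exact Hb|lra|lra]|lra].
Qed.

Lemma max_on_segment l1 l2 : I l1 -> I l2 -> l1 <= l2 ->
  exists M, l1 <= M <= l2 /\ forall l, l1 <= l <= l2 -> N l <= N M.
Proof.
  intros H1 H2 Hle.
  set (cl := clamp l1 l2).
  assert (HIcl : forall t, I (cl t)).
  { intros t. apply (hI l1 l2); auto; apply clamp_range; exact Hle. }
  assert (Hcont : forall c, continuity_pt (fun t => N (cl t)) c).
  { intros c. apply continuity_pt_filterlim.
    apply filterlim_comp with (G := within I (locally (cl c))).
    - intros P [eps HP]. exists eps. intros y Hy. apply HP; [|apply HIcl].
      change (Rabs (cl y - cl c) < eps). change (Rabs (y - c) < eps) in Hy.
      pose proof (clamp_lipschitz l1 l2 y c). unfold cl. lra.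
    - apply hN_cont, HIcl. }
  destruct (continuity_ab_maj _ l1 l2 Hle (fun c _ => Hcont c)) as [M [HM HMrange]].
  exists M. split; [exact HMrange|].
  intros l Hl. specialize (HM l Hl). unfold cl in HM.
  rewrite !clamp_id in HM by assumption. exact HM.
Qed.

Lemma right_increasing_strictly_increasing l1 l2 :
  I l1 -> I l2 -> l1 < l2 -> N l1 < N l2.
Proof.
  intros H1 H2 Hlt.
  destruct (max_on_segment l1 l2 H1 H2 (Rlt_le _ _ Hlt)) as [M [HMrange HM]].
  assert (HIM : I M) by (apply (hI l1 l2); tauto).
  (* the maximiser is l2, otherwise a larger value exists to its right *)
  assert (HMl2 : M = l2).
  { destruct (Req_dec M l2) as [E|Hne]; [exact E|exfalso].
    destruct (right_increase_in_segment M l2 HIM H2 ltac:(lra)) as [l [Hl Hgt]].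
    pose proof (HM l ltac:(lra)). lra. }
  destruct (right_increase_in_segment l1 l2 H1 H2 Hlt) as [l [Hl Hgt]].
  pose proof (HM l ltac:(lra)). subst M. lra.
Qed.

End RightIncreasing.

Theorem lemma3 (tau : nat) (htau : (1 <= tau)%nat)
  (I : R -> Prop) (hI : is_interval I) (hIpos : forall x, I x -> 0 < x)
  (z : R -> Complex.C)
  (hz_nonreal : forall lam, I lam -> Im (z lam) <> 0)
  (hz_cont : continuous_on I z)
  (hz_root : forall lam, I lam -> h tau (z lam) lam = RtoC 0) :
  forall l1 l2, I l1 -> I l2 -> l1 < l2 -> Cmod (z l1) < Cmod (z l2).
Proof.
  apply (right_increasing_strictly_increasing (fun l => Cmod (z l)) I hI).
  - intros l Hl. eapply filterlim_comp; [apply hz_cont, Hl|apply lim_Cmod].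
  - exact (root_modulus_right_increase tau I z htau hIpos hz_nonreal hz_cont hz_root).
Qed.
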